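(* Let $b>a>0$ and $t>0$. For any measurable $f:[0,t]\to\mathbb{R}_+$, $$\int_0^t\frac{ds}{(s+f(s))^{1+a}}\le\kappa(a,b)\Big(\int_0^t\frac{ds}{(s+f(s))^{1+b}}\Big)^{a/b},\qquad \kappa(a,b)=\frac{a+1}{a}\Big[\frac{b}{b+1}\Big]^{a/b}.$$ *)

From HB Require Import structures.
From mathcomp Require Import all_boot all_order all_algebra.
From mathcomp Require Import all_classical all_reals all_analysis.
Set Implicit Arguments. Unset Strict Implicit. Unset Printing Implicit Defensive.
Import Order.TTheory GRing.Theory Num.Theory.
Local Open Scope ring_scope.

Definition kappa {R : realType} (a b : R) : R :=
  (a + 1) / a * powR (b / (b + 1)) (a / b).

From HB Require Import structures.
From mathcomp Require Import all_boot all_order all_algebra.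
From mathcomp Require Import all_classical all_reals all_analysis.
From mathcomp Require Import measurable_realfun ring.
Import Order.TTheory GRing.Theory Num.Theory numFieldNormedType.Exports.
Local Open Scope classical_set_scope.
Local Open Scope ring_scope.

(* Fix a cutoff c > 0 and let w_c = (1+a)/(1+b) c^(b-a).  By the weighted
   AM-GM inequality, y |-> y^-(1+a) - w_c y^-(1+b) is maximal on [0, +oo[ at
   y = c, and it decreases on [c, +oo[.  As s + f s >= s, the integrand
   (s + f s)^-(1+a) is thus at most w_c (s + f s)^-(1+b) plus the supremum of
   that function over [s, +oo[, which depends on s only and has integral
   (1+a)(b-a)/(ab) c^-a over [0, +oo[.  Writing I_b for the integral of
   (s + f s)^-(1+b), minimising w_c I_b + (1+a)(b-a)/(ab) c^-a over c gives
   kappa(a,b) I_b^(a/b) (when I_b = 0, let c tend to +oo). *)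

Lemma powRVK {R : realType} (x p : R) : 0 <= x -> p != 0 -> (x `^ p^-1) `^ p = x.
Proof. by move=> x0 p0; rewrite -powRrM mulVf // powRr1. Qed.

Section cutoff.
Context {R : realType}.
Variables a b : R.
Hypotheses (a_gt0 : 0 < a) (a_lt_b : a < b).

Let b_gt0 : 0 < b. Proof. exact: lt_trans a_lt_b. Qed.
Let a1_gt0 : 0 < 1 + a. Proof. by rewrite addr_gt0. Qed.
Let b1_gt0 : 0 < 1 + b. Proof. by rewrite addr_gt0. Qed.

Lemma young_powR (u : R) : 0 <= u ->
  u `^ (1 + a) <= (1 + a) / (1 + b) * u `^ (1 + b) + (b - a) / (1 + b).
Proof.
move=> u0; pose p := (1 + b) / (1 + a); pose q := (1 + b) / (b - a).
have ba_gt0 : 0 < b - a by rewrite subr_gt0.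
have := @conjugate_powR R (u `^ (1 + a)) 1 p q (powR_ge0 _ _) ler01.
rewrite mulr1 powR1 -powRrM mulrCA divff ?gt_eqF // mulr1 !invf_div mul1r.
rewrite (mulrC (u `^ _)); apply; rewrite ?divr_gt0 //.
by field; rewrite gt_eqF.
Qed.

(* The weight makes [c] the maximiser of [excess c] on [0, +oo[. *)
Definition weight (c : R) : R := (1 + a) / (1 + b) * c `^ (b - a).
Definition excess (c y : R) : R := y `^ (- (1 + a)) - weight c * y `^ (- (1 + b)).

Lemma weight_ge0 (c : R) : 0 <= weight c.
Proof. by rewrite mulr_ge0 ?powR_ge0 // divr_ge0 ?ltW. Qed.

Lemma ler_weight (c s : R) : 0 <= c <= s -> weight c <= weight s.
Proof.
move=> /andP[c0 cs]; apply: ler_wpM2l; first by rewrite divr_ge0 ?ltW.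
apply: (@ge0_ler_powR R (b - a)); rewrite ?nnegrE ?subr_ge0 ?(ltW a_lt_b) //.
exact: le_trans c0 cs.
Qed.

Lemma weight_mul_powR (y r : R) : 0 < y ->
  weight y * y `^ r = (1 + a) / (1 + b) * y `^ (b - a + r).
Proof. by move=> y0; rewrite /weight -mulrA -powRD // (gt_eqF y0) implybT. Qed.

Lemma excess_peakE (c : R) : 0 < c ->
  excess c c = (b - a) / (1 + b) * c `^ (- (1 + a)).
Proof.
move=> c0; rewrite /excess weight_mul_powR //.
have -> : b - a + - (1 + b) = - (1 + a) by ring.
by field; rewrite gt_eqF.
Qed.

Lemma excess_peak_ge0 (c : R) : 0 < c -> 0 <= excess c c.
Proof.
move=> c0; rewrite excess_peakE // mulr_ge0 ?powR_ge0 //.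
by rewrite divr_ge0 ?subr_ge0 // ltW.
Qed.

Lemma excess_le_peak (c y : R) : 0 < c -> 0 <= y -> excess c y <= excess c c.
Proof.
move=> c0; rewrite le_eqVlt => /predU1P[<-|y0].
  (* [0 `^ r = 0] for [r != 0], so [excess c 0 = 0]. *)
  rewrite /excess !powR0 ?oppr_eq0 ?gt_eqF // mulr0 subr0.
  exact: excess_peak_ge0.
have C0 : 0 <= c `^ (- (1 + a)) := powR_ge0 _ _.
have CA : c `^ (- (1 + a)) * c `^ (1 + a) = 1.
  by rewrite powRN mulVf // gt_eqF // powR_gt0.
have CB : c `^ (- (1 + a)) * c `^ (1 + b) = c `^ (b - a).
  by rewrite -powRD ?(gt_eqF c0) ?implybT //; congr powR; ring.
have cy r : (c / y) `^ r = c `^ r * y `^ (- r).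
  by rewrite powRM ?invr_ge0 ?ltW // -powR_inv1 ?ltW // -powRrM mulN1r.
(* Young's inequality at [c / y], scaled by [c `^ (- (1 + a))]. *)
have := @young_powR (c / y) (divr_ge0 (ltW c0) (ltW y0)); rewrite !cy => young.
rewrite excess_peakE // /excess /weight lerBlDl.
have -> : y `^ (- (1 + a)) = c `^ (- (1 + a)) * (c `^ (1 + a) * y `^ (- (1 + a))).
  by rewrite mulrA CA mul1r.
rewrite -CB; apply: le_trans (ler_wpM2l C0 young) _.
by rewrite le_eqVlt; apply/predU1P; left; ring.
Qed.

(* Compare [excess s] at its peak [s] and use [weight c <= weight s]. *)
Lemma excess_nonincr (c s y : R) : 0 < c -> c <= s -> s <= y ->
  excess c y <= excess c s.
Proof.
move=> c0 cs sy; have s0 := lt_le_trans c0 cs; have y0 := lt_le_trans s0 sy.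
have := @excess_le_peak s y s0 (ltW y0).
have slope w :
    (y `^ (- (1 + a)) - w * y `^ (- (1 + b)) <= s `^ (- (1 + a)) - w * s `^ (- (1 + b)))
    = (y `^ (- (1 + a)) - s `^ (- (1 + a)) <= w * (y `^ (- (1 + b)) - s `^ (- (1 + b)))).
  by rewrite -[LHS]subr_ge0 -[RHS]subr_ge0; congr (0 <= _); ring.
rewrite /excess !slope => /le_trans; apply.
have : y `^ (- (1 + b)) - s `^ (- (1 + b)) <= 0.
  rewrite subr_le0 !powRN lef_pV2 ?posrE ?powR_gt0 //.
  by apply: (@ge0_ler_powR R (1 + b)); rewrite ?nnegrE ?(ltW b1_gt0) ?(ltW s0) ?(ltW y0).
by move/ler_wnM2r; apply; rewrite ler_weight // ltW.
Qed.

(* [envelope c s] is the supremum of [excess c y] over [y >= s]. *)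
Definition envelope (c s : R) : R := excess c (Num.max s c).

Lemma excess_le_envelope (c s y : R) : 0 < c -> 0 <= s -> s <= y ->
  excess c y <= envelope c s.
Proof.
move=> c0 s0 sy; rewrite /envelope; have [cs|sc] := leP c s.
  exact: excess_nonincr.
by rewrite excess_le_peak // (le_trans s0 sy).
Qed.

Lemma measurable_excess (c : R) : measurable_fun setT (excess c).
Proof. by apply: measurable_funB => //; apply: measurable_funM. Qed.

Lemma derivable_excess (c y : R) : 0 < y -> derivable (excess c) y 1.
Proof.
move=> y0; have powR_derivable (r : R) : derivable (@powR R ^~ r) y 1.
  by apply: derivable_powR; rewrite in_itv /= y0.
rewrite (_ : excess c = @powR R ^~ (- (1 + a)) - weight c \*: @powR R ^~ (- (1 + b)));
  last by apply/funext.
apply: derivableB; first exact: powR_derivable.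
exact/derivableZ/powR_derivable.
Qed.

Definition excess_primitive (c y : R) : R :=
  - a^-1 * y `^ (- a) + weight c / b * y `^ (- b).

Lemma is_derive_excess_primitive (c y : R) : 0 < y ->
  is_derive y 1 (excess_primitive c) (excess c y).
Proof.
move=> y0; rewrite (_ : excess_primitive c =
    (- a^-1) \*: @powR R ^~ (- a) + (weight c / b) \*: @powR R ^~ (- b)); last by apply/funext.
apply: is_derive_eq (is_deriveD (is_deriveZ _ (is_derive1_powR (- a) y0))
                                (is_deriveZ _ (is_derive1_powR (- b) y0))) _.
have scaleE (k z : R) : k *: z = k * z by [].
rewrite !scaleE /excess -[- a - 1]opprD -[- b - 1]opprD [1 + a]addrC [1 + b]addrC.
by field; rewrite !gt_eqF.
Qed.

Lemma continuous_excess_primitive (c y : R) : 0 < y ->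
  {for y, continuous (excess_primitive c)}.
Proof.
move=> y0; apply/differentiable_continuous; rewrite -derivable1_diffP.
by apply: ex_derive; exact: is_derive_excess_primitive.
Qed.

Lemma integral_excess (c T : R) : 0 < c -> c < T ->
  (\int[lebesgue_measure]_(y in `[c, T]) (excess c y)%:E
   = (excess_primitive c T)%:E - (excess_primitive c c)%:E)%E.
Proof.
move=> c0 cT; have pos y : y \in `[c, T] -> 0 < y.
  by rewrite in_itv /= => /andP[cy _]; exact: lt_le_trans cy.
apply: continuous_FTC2 => //.
- apply: derivable_within_continuous => y /pos.
  exact: derivable_excess.
- split.
  + move=> y; rewrite in_itv /= => /andP[cy _].
    by apply: ex_derive; exact: is_derive_excess_primitive (lt_trans c0 cy).
  + exact/cvg_at_right_filter/continuous_excess_primitive.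
  + exact/cvg_at_left_filter/continuous_excess_primitive/(lt_trans c0).
- move=> y; rewrite in_itv /= => /andP[cy _]; rewrite derive1E.
  exact/derive_val/is_derive_excess_primitive/(lt_trans c0).
Qed.

Lemma excess_ge0 (c y : R) : 0 < c -> c <= y -> 0 <= excess c y.
Proof.
move=> c0 cy; have y0 := lt_le_trans c0 cy.
apply: le_trans (@excess_peak_ge0 y y0) _.
by rewrite /excess lerD2l lerN2 ler_wpM2r ?powR_ge0 // ler_weight // ltW.
Qed.

Lemma excess_primitive_peakE (c : R) : 0 < c ->
  excess_primitive c c = ((1 + a) / (1 + b) / b - a^-1) * c `^ (- a).
Proof.
move=> c0; rewrite /excess_primitive mulrAC weight_mul_powR //.
have -> : b - a + - b = - a by ring.
by ring.
Qed.

Lemma excess_primitive_le0 (c y : R) : 0 < c -> c <= y -> excess_primitive c y <= 0.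
Proof.
move=> c0 cy; have y0 := lt_le_trans c0 cy.
have theta_le : (1 + a) / (1 + b) / b <= a^-1.
  rewrite -mulrA -invfM ler_pdivrMr ?mulr_gt0 // mulrC ler_pdivlMr //.
  by apply: ler_pM; rewrite ?lerD2l ltW.
rewrite /excess_primitive mulNr addrC subr_le0.
apply: le_trans (_ : weight y / b * y `^ (- b) <= _).
  apply: ler_wpM2r; first exact: powR_ge0.
  by apply: ler_wpM2r; rewrite ?invr_ge0 ?(ltW b_gt0) // ler_weight // ltW.
rewrite mulrAC weight_mul_powR // (_ : b - a + - b = - a); last by ring.
by rewrite mulrAC; apply: ler_wpM2r; first exact: powR_ge0.
Qed.

Lemma envelope_ge0 (c s : R) : 0 < c -> 0 <= envelope c s.
Proof. by move=> c0; apply: excess_ge0; rewrite // le_max lexx orbT. Qed.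

Lemma measurable_envelope (c : R) : measurable_fun setT (envelope c).
Proof.
apply: (measurableT_comp (measurable_excess c)).
by apply: measurable_maxr => //; exact: measurable_cst.
Qed.

Lemma integral_envelope_le (c t : R) : 0 < c -> 0 < t ->
  (\int[lebesgue_measure]_(s in `[0%R, t]) (envelope c s)%:E
   <= ((1 + a) * (b - a) / (a * b) * c `^ (- a))%:E)%E.
Proof.
move=> c0 t0; set T := t + c; have cT : c < T by rewrite /T ltrDr.
have m_envelope : measurable_fun setT (fun s : R => (envelope c s)%:E).
  by apply/measurable_EFinP; exact: measurable_envelope.
have widen : (\int[lebesgue_measure]_(s in `[0%R, t]) (envelope c s)%:E
    <= \int[lebesgue_measure]_(s in `[0%R, T]) (envelope c s)%:E)%E.
  apply: ge0_subset_integral => //.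
  - exact: measurable_funS m_envelope.
  - by move=> s _; rewrite lee_fin envelope_ge0.
  - by apply: subset_itv; rewrite // bnd_simp lerDl ltW.
apply: le_trans widen _.
rewrite (@itv_bndbnd_setU _ _ _ (BRight c)) ?bnd_simp ?(ltW c0) ?(ltW cT) //.
rewrite integral_setU //=; last 2 first.
- exact: measurable_funS m_envelope.
- apply/disj_setPRL => z /=; rewrite !in_itv /= => /andP[cz _] /andP[_ zc].
  by move: (lt_le_trans cz zc); rewrite ltxx.
have plateau : (\int[lebesgue_measure]_(s in `[0%R, c]) (envelope c s)%:E
    = (c * excess c c)%:E)%E.
  transitivity (\int[lebesgue_measure]_(s in `[0%R, c]) (cst (excess c c)%:E s))%E.
    apply: eq_integral => s; rewrite inE /= in_itv /= => /andP[_ sc].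
    by rewrite /envelope max_r.
  by rewrite integral_cst //= lebesgue_measure_itv /= lte_fin c0 oppr0 adde0 -EFinM mulrC.
have tail : (\int[lebesgue_measure]_(s in `]c, T]) (envelope c s)%:E
    = (excess_primitive c T)%:E - (excess_primitive c c)%:E)%E.
  rewrite -(@integral_excess c T c0 cT) -integral_itv_obnd_cbnd; last first.
    by apply/measurable_EFinP; apply: measurable_funS (measurable_excess c).
  apply: eq_integral => s; rewrite inE /= in_itv /= => /andP[cs _].
  by rewrite /envelope max_l // ltW.
rewrite plateau tail -EFinD lee_fin excess_peakE // excess_primitive_peakE //.
rewrite mulrCA -{1}(powRr1 (ltW c0)) -powRD ?(gt_eqF c0) ?implybT //.
rewrite (_ : 1 + - (1 + a) = - a); last by ring.
set u := c `^ (- a); set Pc := (_ - a^-1) * u.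
have -> : (1 + a) * (b - a) / (a * b) * u = (b - a) / (1 + b) * u - Pc.
  by rewrite /Pc; field; rewrite !gt_eqF.
by rewrite lerD2l lerBlDr addNr excess_primitive_le0 // ltW.
Qed.

Lemma cutoff_bound (t : R) (f : R -> R) (c : R) : 0 < t -> 0 < c ->
  measurable_fun `[0%R, t] f -> (forall s, s \in `[0%R, t] -> 0 <= f s) ->
  (\int[lebesgue_measure]_(s in `[0%R, t]) ((powR (s + f s) (1 + a))^-1)%:E
   <= (weight c)%:E
        * \int[lebesgue_measure]_(s in `[0%R, t]) ((powR (s + f s) (1 + b))^-1)%:E
      + ((1 + a) * (b - a) / (a * b) * c `^ (- a))%:E)%E.
Proof.
move=> t0 c0 mf f0.
have m_inv_pow (r : R) : measurable_fun `[0%R, t] (fun s => (powR (s + f s) r)^-1).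
  rewrite (_ : (fun s => _) = (fun s => powR (s + f s) (- r))); last first.
    by apply/funext => s; rewrite powRN.
  by apply: (measurableT_comp (measurable_powR _)); exact: measurable_funD.
have pointwise : (\int[lebesgue_measure]_(s in `[0%R, t]) ((powR (s + f s) (1 + a))^-1)%:E
    <= \int[lebesgue_measure]_(s in `[0%R, t])
         ((weight c)%:E * ((powR (s + f s) (1 + b))^-1)%:E + (envelope c s)%:E))%E.
  apply: ge0_le_integral => //.
  - by move=> s _; rewrite lee_fin invr_ge0 powR_ge0.
  - by apply/measurable_EFinP; exact: m_inv_pow.
  - apply: emeasurable_funD.
      by apply: emeasurable_funM => //; apply/measurable_EFinP; exact: m_inv_pow.
    by apply/measurable_EFinP; exact: measurable_funS (measurable_envelope c).
  - move=> s ts; have sx : s <= s + f s by rewrite lerDl f0 // inE.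
    move: ts; rewrite /= in_itv /= => /andP[s0 _].
    have := @excess_le_envelope c s (s + f s) c0 s0 sx.
    by rewrite /excess lerBlDl -EFinM -EFinD lee_fin -!powRN.
apply: le_trans pointwise _.
rewrite ge0_integralD //; first last.
- by apply/measurable_EFinP; exact: measurable_funS (measurable_envelope c).
- by move=> s _; rewrite lee_fin envelope_ge0.
- by apply: emeasurable_funM => //; apply/measurable_EFinP; exact: m_inv_pow.
- by move=> s _; rewrite mule_ge0 ?lee_fin ?weight_ge0 ?invr_ge0 ?powR_ge0.
rewrite ge0_integralZl_EFin ?weight_ge0 //; first last.
- by apply/measurable_EFinP; exact: m_inv_pow.
- by move=> s _; rewrite lee_fin invr_ge0 powR_ge0.
by apply: leeD2l; exact: integral_envelope_le.
Qed.

Lemma kappa_gt0 : 0 < kappa a b.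
Proof. by rewrite /kappa mulr_gt0 ?divr_gt0 ?powR_gt0 ?divr_gt0 // addr_gt0. Qed.

Lemma cutoff_vanishing (e : R) : 0 < e ->
  exists2 c, 0 < c & (1 + a) * (b - a) / (a * b) * c `^ (- a) = e.
Proof.
move=> e0; set K := (1 + a) * (b - a) / (a * b).
have K0 : 0 < K by rewrite /K divr_gt0 ?mulr_gt0 // subr_gt0.
exists ((e / K) `^ (- a)^-1); first by rewrite powR_gt0 // divr_gt0.
have eK0 : 0 <= e / K by rewrite divr_ge0 // ltW.
rewrite powRVK //; last by rewrite oppr_eq0 gt_eqF.
by rewrite mulrC divfK // gt_eqF.
Qed.

(* The minimiser of the bound of [cutoff_bound] is given by c^-b = b y / (b + 1). *)
Lemma cutoff_optimum (y : R) : 0 < y -> exists2 c, 0 < c &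
  weight c * y + (1 + a) * (b - a) / (a * b) * c `^ (- a) = kappa a b * y `^ (a / b).
Proof.
move=> y0; set q := b * y / (b + 1).
have q0 : 0 < q by rewrite divr_gt0 ?mulr_gt0 // addr_gt0.
exists (q `^ (- b)^-1); first exact: powR_gt0.
set c := q `^ (- b)^-1.
have cb : c `^ (- b) = q by rewrite powRVK ?oppr_eq0 ?gt_eqF // ltW.
have ca : c `^ (- a) = q `^ (a / b).
  by rewrite /c -powRrM; congr powR; field; rewrite gt_eqF.
have cba : c `^ (b - a) = c `^ (- a) / c `^ (- b).
  rewrite -powRB ?(gt_eqF (powR_gt0 _ q0)) ?implybT //; congr powR; ring.
have qE : (b / (b + 1)) `^ (a / b) * y `^ (a / b) = q `^ (a / b).
  by rewrite -powRM ?divr_ge0 ?addr_ge0 ?(ltW b_gt0) ?(ltW y0) // mulrAC.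
rewrite /weight cba ca cb /kappa -[RHS]mulrA qE; set Q := q `^ (a / b).
by rewrite /q; field; rewrite ?gt_eqF ?addr_gt0.
Qed.

Lemma le_kappa_poweR (x y : \bar R) : (0 <= y)%E ->
  (forall c : R, (0 < c)%R ->
     x <= (weight c)%:E * y + ((1 + a) * (b - a) / (a * b) * c `^ (- a))%:E)%E ->
  (x <= (kappa a b)%:E * poweR y (a / b))%E.
Proof.
case: y => [y| |] // y0 bound; last first.
  by rewrite poweRyr ?gt0_muley ?lte_fin ?kappa_gt0 ?leey // gt_eqF // divr_gt0.
rewrite poweR_EFin -EFinM; move: y0; rewrite lee_fin le_eqVlt => /predU1P[y0|y_gt0].
  rewrite -y0 powR0 ?mulr0; last by rewrite gt_eqF // divr_gt0.
  apply/lee_addgt0Pr => e e0; have [c c0 <-] := cutoff_vanishing _ e0.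
  by rewrite add0e; move: (bound c c0); rewrite -y0 mule0 add0e.
have [c c0 <-] := cutoff_optimum _ y_gt0.
by rewrite EFinD EFinM; exact: bound.
Qed.
End cutoff.

Theorem lemma1p3 (R : realType) (a b t : R) (f : R -> R)
  (ha : 0 < a) (hab : a < b) (ht : 0 < t)
  (mf : measurable_fun `[0%R, t] f)
  (f0 : forall s, s \in `[0%R, t] -> 0 <= f s) :
  (\int[lebesgue_measure]_(s in `[0%R, t]) ((powR (s + f s) (1 + a))^-1)%:E
   <= (kappa a b)%:E *
      poweR (\int[lebesgue_measure]_(s in `[0%R, t]) ((powR (s + f s) (1 + b))^-1)%:E)
            (a / b))%E.
Proof.
apply: le_kappa_poweR => //.
  by apply: integral_ge0 => s _; rewrite lee_fin invr_ge0 powR_ge0.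
by move=> c c0; exact: cutoff_bound.
Qed.
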